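(* Let $n,n'\in\mathbb{N}$, $\mathbb{K}$ a field, $R=\mathbb{K}[X_1,\ldots,X_n]$, $R'=\mathbb{K}[X_1,\ldots,X_{n'}]$, and $J\subsetneq I\subset R$ monomial ideals. Let $\phi:\mathbb{N}^n\to\mathbb{N}^{n'}$ be a map, $\Phi:R\to R'$ the $\mathbb{K}$-linear map with $\Phi(X^a)=X^{\phi(a)}$ on monomials, and let $I'$, $J'\subset R'$ be the ideals generated by $\Phi(I)$ resp. $\Phi(J)$. Let $\Omega$ be a finite set, let $I/J=\bigoplus_{i\in\Omega}X^{a_i}\mathbb{K}[Z_i]$ be a Stanley decomposition of $I/J$, and let $Z_i'$, $i\in\Omega$, be subsets of $\{X_1,\ldots,X_{n'}\}$. Assume that $\phi$ is injective, monotonic and preserves joins, and that \[\Phi(X^{a_i})\mathbb{K}[Z_i']\cap\Phi(R)=\Phi(X^{a_i}\mathbb{K}[Z_i])\quad\text{for each } i\in\Omega.\] Let $V=\sum_{i\in\Omega}\Phi(X^{a_i})\mathbb{K}[Z_i']$ as a graded vector space. Then this sum is direct, $V=\bigoplus_{i\in\Omega}\Phi(X^{a_i})\mathbb{K}[Z_i']$, and $V\subset I'/J'$ (i.e. $V$ is spanned by monomials lying in $I'\setminus J'$).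
   Context: $\mathbb{N}^n$ carries the componentwise partial order, with join $\vee$ the componentwise maximum; monotonic means order-preserving; preserving joins means $\phi(a\vee b)=\phi(a)\vee\phi(b)$. A Stanley decomposition of $I/J$ (fine multigrading) is a finite family of pairs $(\mathbb{K}[Z_i], X^{a_i})$, with $Z_i$ a subset of the variables and $X^{a_i}\mathbb{K}[Z_i]$ free over $\mathbb{K}[Z_i]$, such that $I/J=\bigoplus_i X^{a_i}\mathbb{K}[Z_i]$ as multigraded $\mathbb{K}$-vector spaces. *)

From HB Require Import structures.
From mathcomp Require Import all_boot all_algebra.
From mathcomp Require Import mpoly.
Set Implicit Arguments. Unset Strict Implicit. Unset Printing Implicit Defensive.
Import GRing.Theory.
Local Open Scope ring_scope.

Section Defs.
Variable K : fieldType.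

Definition gen_ideal (n : nat) (S : {mpoly K[n]} -> Prop) : {mpoly K[n]} -> Prop :=
  fun p => exists s : seq ({mpoly K[n]} * {mpoly K[n]}),
    (forall x, x \in s -> S x.2) /\ p = \sum_(x <- s) x.1 * x.2.

Definition monomial_ideal (n : nat) (I : {mpoly K[n]} -> Prop) : Prop :=
  exists M : 'X_{1..n} -> Prop,
    forall p, I p <-> gen_ideal (fun q => exists m, M m /\ q = 'X_[m]) p.

(* the Stanley space X^a K[Z], Z a set of variables: the K-span of the
   monomials X^(a+b) with b supported in Z *)
Definition stanley_space (n : nat) (a : 'X_{1..n}) (Z : {set 'I_n})
  : {mpoly K[n]} -> Prop :=
  fun p => forall m, m \in msupp p ->
    exists b : 'X_{1..n}, (forall j, j \notin Z -> b j = 0%N) /\ m = (a + b)%MM.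

(* (a_i, Z_i)_{i in Omega} is a Stanley decomposition of I/J:
   each X^(a_i) K[Z_i] lies in I, and the map  (+)_i X^(a_i)K[Z_i] -> I/J
   (sum followed by the projection) is bijective. *)
Definition stanley_decomposition (n : nat) (I J : {mpoly K[n]} -> Prop)
  (Omega : finType) (a : Omega -> 'X_{1..n}) (Z : Omega -> {set 'I_n}) : Prop :=
  [/\ forall i p, stanley_space (a i) (Z i) p -> I p,
      (forall p, I p -> exists v : Omega -> {mpoly K[n]},
          (forall i, stanley_space (a i) (Z i) (v i)) /\
          J (p - \sum_i v i)) &
      (forall v : Omega -> {mpoly K[n]},
          (forall i, stanley_space (a i) (Z i) (v i)) ->
          J (\sum_i v i) -> forall i, v i = 0)].

Definition Phi_map (n n' : nat) (phi : 'X_{1..n} -> 'X_{1..n'})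
  (p : {mpoly K[n]}) : {mpoly K[n']} :=
  \sum_(m <- msupp p) p@_m *: 'X_[phi m].

Definition Phi_image (n n' : nat) (phi : 'X_{1..n} -> 'X_{1..n'})
  (S : {mpoly K[n]} -> Prop) : {mpoly K[n']} -> Prop :=
  fun q => exists p, S p /\ q = Phi_map phi p.

End Defs.

Definition monotonic_mnm (n n' : nat) (phi : 'X_{1..n} -> 'X_{1..n'}) : Prop :=
  forall a b, lem a b -> lem (phi a) (phi b).
Definition preserves_joins (n n' : nat) (phi : 'X_{1..n} -> 'X_{1..n'}) : Prop :=
  forall a b, phi (mlcm a b) = mlcm (phi a) (phi b).

(* Every monomial X^m of Phi(X^(a_i)) K[Z'_i] is divisible by Phi(X^(a_i)), hence lies in
   I'.  The key observation: if moreover phi c <= m, then phi (a_i \/ c) = phi a_i \/ phi c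
   lies between phi a_i and m, so by convexity of Stanley spaces X^(phi (a_i \/ c)) is in
   Phi(X^(a_i)) K[Z'_i] and in the image of Phi, and the intersection hypothesis pulls it
   back to X^(a_i \/ c) in X^(a_i) K[Z_i].  For c = a_k, when X^m also occurs in the k-th
   summand, this monomial would lie in two summands of the decomposition of I/J; for c with
   X^c in J, which is what X^m in J' provides, it would lie in J.  Both contradict the
   directness of the decomposition of I/J. *)

From HB Require Import structures.
From mathcomp Require Import all_boot all_algebra.
From mathcomp Require Import mpoly.
Import GRing.Theory.
Local Open Scope ring_scope.
Set Implicit Arguments. Unset Strict Implicit.

Section GenIdealSupport.
Variables (K : fieldType) (n : nat).

Definition upward_closed (P : 'X_{1..n} -> Prop) := forall m d, P m -> P (m + d)%MM.

Lemma gen_ideal_msupp (P : 'X_{1..n} -> Prop) (S : {mpoly K[n]} -> Prop) p :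
  upward_closed P -> (forall q, S q -> {in msupp q, forall m, P m}) ->
  gen_ideal S p -> {in msupp p, forall m, P m}.
Proof.
move=> P_up supp_S [s [sS ->]]; rewrite big_seq.
apply: (big_ind (fun q => {in msupp q, forall m, P m})).
- by move=> m; rewrite msupp0.
- by move=> q1 q2 Pq1 Pq2 m /msuppD_le; rewrite mem_cat => /orP [/Pq1|/Pq2].
- move=> [r q] /sS /supp_S Sq m /msuppM_le /allpairsP [[m1 m2] [/= _ /Sq Pm2 ->]].
  by rewrite addmC; apply: P_up.
Qed.

Section GeneratedByMonomials.
Variables (I : {mpoly K[n]} -> Prop) (M : 'X_{1..n} -> Prop).
Hypothesis I_gen : forall p, I p <-> gen_ideal (fun q => exists m, M m /\ q = 'X_[m]) p.

Lemma gen_monomialX g w : M g -> (g <= w)%MM -> I 'X_[w].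
Proof.
move=> Mg le_gw; apply/I_gen; exists [:: ('X_[(w - g)%MM], 'X_[g])]; split.
  by move=> x; rewrite mem_seq1 => /eqP -> /=; exists g.
by rewrite big_seq1 /= -mpolyXD submK.
Qed.

Lemma gen_monomial_msupp p : I p -> {in msupp p, forall m, exists2 g, M g & (g <= m)%MM}.
Proof.
move=> /I_gen; apply: gen_ideal_msupp.
  by move=> m d [g Mg le_gm]; exists g; last exact: lepm_trans le_gm (lem_addr _ _).
by move=> _ [g [Mg ->]] m /mem_msuppXP <-; exists g; last exact: lepm_refl.
Qed.

End GeneratedByMonomials.

Variable I : {mpoly K[n]} -> Prop.
Hypothesis I_monomial : monomial_ideal I.

Lemma monomial_ideal0 : I 0.
Proof. by case: I_monomial => M ->; exists [::]; rewrite big_nil. Qed.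

Lemma monomial_ideal_msupp p m : I p -> m \in msupp p -> I 'X_[m].
Proof.
case: I_monomial => M I_gen Ip /(gen_monomial_msupp I_gen Ip) [g Mg le_gm].
exact: (gen_monomialX I_gen Mg le_gm).
Qed.

Lemma monomial_idealX_le u w : I 'X_[u] -> (u <= w)%MM -> I 'X_[w].
Proof.
case: I_monomial => M I_gen Iu le_uw.
have [|g Mg le_gu] := gen_monomial_msupp I_gen Iu (x := u); first by rewrite msuppX mem_head.
exact: (gen_monomialX I_gen Mg (lepm_trans le_gu le_uw)).
Qed.

End GenIdealSupport.

Lemma mpolyX_neq0 (K : fieldType) (n : nat) (c : 'X_{1..n}) : ('X_[c] : {mpoly K[n]}) != 0.
Proof. by rewrite -msupp_eq0 msuppX. Qed.

Section PhiMap.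
Variables (K : fieldType) (n n' : nat) (phi : 'X_{1..n} -> 'X_{1..n'}).

Lemma Phi_mapX c : Phi_map phi ('X_[c] : {mpoly K[n]}) = 'X_[phi c].
Proof. by rewrite /Phi_map msuppX big_seq1 mcoeffX eqxx scale1r. Qed.

Lemma msupp_Phi_map (p : {mpoly K[n]}) m :
  m \in msupp (Phi_map phi p) -> exists2 c, c \in msupp p & m = phi c.
Proof.
move=> m_supp; have /hasP [c c_supp /eqP <-] : has (fun c => phi c == m) (msupp p).
  apply: contraLR m_supp => /hasPn no_c.
  rewrite mcoeff_msupp negbK /Phi_map raddf_sum big1_seq //= => c c_supp.
  by rewrite mcoeffZ mcoeffX (negbTE (no_c c c_supp)) mulr0.
by exists c.
Qed.

Lemma mcoeff_Phi_map (p : {mpoly K[n]}) c : injective phi -> (Phi_map phi p)@_(phi c) = p@_c.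
Proof.
move=> phi_inj; rewrite {2}(mpolyE p) /Phi_map !raddf_sum; apply: eq_bigr => m _ /=.
by rewrite !mcoeffZ !mcoeffX inj_eq.
Qed.

Lemma gen_Phi_image_monomialX (J : {mpoly K[n]} -> Prop) m :
  monomial_ideal J -> gen_ideal (Phi_image phi J) 'X_[m] ->
  exists2 c, J 'X_[c] & (phi c <= m)%MM.
Proof.
move=> J_monomial J'm.
have P_up : upward_closed (fun m => exists2 c, J 'X_[c] & (phi c <= m)%MM).
  by move=> m0 d [c Jc le_cm]; exists c; last exact: lepm_trans le_cm (lem_addr _ _).
apply: (gen_ideal_msupp P_up _ J'm); last by rewrite msuppX mem_head.
move=> _ [p [Jp ->]] _ /msupp_Phi_map [c c_supp ->].
by exists c; [exact: (monomial_ideal_msupp J_monomial Jp c_supp) | exact: lepm_refl].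
Qed.

End PhiMap.

Section StanleySpace.
Variables (K : fieldType) (n : nat) (a : 'X_{1..n}) (Z : {set 'I_n}).

Lemma stanley_space0 : stanley_space a Z (0 : {mpoly K[n]}).
Proof. by move=> m; rewrite msupp0. Qed.

Lemma stanley_spaceX : stanley_space a Z ('X_[a] : {mpoly K[n]}).
Proof.
move=> _ /mem_msuppXP <-; exists 0%MM; split; last by rewrite addm0.
by move=> j _; rewrite mnm0E.
Qed.

Lemma stanley_spaceN (p : {mpoly K[n]}) : stanley_space a Z p -> stanley_space a Z (- p).
Proof. by move=> Sp m; rewrite (perm_mem (msuppN p)); apply: Sp. Qed.

Lemma stanley_space_msupp_le (p : {mpoly K[n]}) m :
  stanley_space a Z p -> m \in msupp p -> (a <= m)%MM.
Proof. by move=> Sp /Sp [b [_ ->]]; apply: lem_addr. Qed.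

Lemma stanley_spaceX_between (p : {mpoly K[n]}) m u :
  stanley_space a Z p -> m \in msupp p -> (a <= u)%MM -> (u <= m)%MM ->
  stanley_space a Z ('X_[u] : {mpoly K[n]}).
Proof.
move=> Sp /Sp [b [bZ ->]] le_au le_um _ /mem_msuppXP <-.
exists (u - a)%MM; split; last by rewrite addmC submK.
move=> j j_Z; rewrite mnmBE; apply/eqP; rewrite subn_eq0.
by have := mnm_lepP le_um j; rewrite mnmDE bZ // addn0.
Qed.

End StanleySpace.

Section StanleyDecomposition.
Variables (K : fieldType) (n : nat) (I J : {mpoly K[n]} -> Prop).
Variables (Omega : finType) (a : Omega -> 'X_{1..n}) (Z : Omega -> {set 'I_n}).
Hypothesis SD : stanley_decomposition I J a Z.

Lemma stanley_decomposition_J_eq0 i p :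
  stanley_space (a i) (Z i) p -> J p -> p = 0.
Proof.
case: SD => _ _ SD_inj Sp Jp.
pose v k := if k == i then p else 0.
have Sv k : stanley_space (a k) (Z k) (v k).
  by rewrite /v; case: eqP => [->|_] //; apply: stanley_space0.
have := SD_inj v Sv; rewrite /v -big_mkcond big_pred1_eq => /(_ Jp i).
by rewrite eqxx.
Qed.

Lemma stanley_decomposition_meet_eq0 i j (p : {mpoly K[n]}) :
  J 0 -> i != j -> stanley_space (a i) (Z i) p -> stanley_space (a j) (Z j) p -> p = 0.
Proof.
case: SD => _ _ SD_inj J0 neq_ij Sip Sjp.
pose v k := if k == i then p else if k == j then - p else 0.
have Sv k : stanley_space (a k) (Z k) (v k).
  rewrite /v; case: eqP => [->|_] //; case: eqP => [->|_]; last exact: stanley_space0.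
  exact: stanley_spaceN.
have sum_v : \sum_k v k = 0.
  rewrite (bigD1 i) //= (bigD1 j) 1?eq_sym //= big1 => [|k /andP [/negbTE ki /negbTE kj]].
    by rewrite /v eqxx eq_sym (negbTE neq_ij) eqxx addr0 subrr.
  by rewrite /v ki kj.
by have := SD_inj v Sv; rewrite sum_v /v => /(_ J0 i); rewrite eqxx.
Qed.

End StanleyDecomposition.

Section StanleyTransfer.
Variables (K : fieldType) (n n' : nat) (I J : {mpoly K[n]} -> Prop).
Variables (phi : 'X_{1..n} -> 'X_{1..n'}) (Omega : finType) (a : Omega -> 'X_{1..n}).
Variables (Z : Omega -> {set 'I_n}) (Z' : Omega -> {set 'I_n'}).
Hypotheses (J_monomial : monomial_ideal J) (SD : stanley_decomposition I J a Z).
Hypotheses (phi_inj : injective phi) (phi_join : preserves_joins phi).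
Hypothesis cap : forall i (q : {mpoly K[n']}),
  (stanley_space (phi (a i)) (Z' i) q /\ Phi_image phi (fun _ : {mpoly K[n]} => True) q)
  <-> Phi_image phi (stanley_space (a i) (Z i)) q.

Lemma stanley_space_PhiX i c :
  stanley_space (phi (a i)) (Z' i) ('X_[phi c] : {mpoly K[n']}) ->
  stanley_space (a i) (Z i) ('X_[c] : {mpoly K[n]}).
Proof.
move=> S'c; have [|p [Sp Phi_p]] := (cap i _).1 (conj S'c _).
  by exists 'X_[c]; rewrite Phi_mapX.
move=> _ /mem_msuppXP <-; apply: Sp.
by rewrite mcoeff_msupp -(mcoeff_Phi_map _ _ phi_inj) -Phi_p mcoeffX eqxx oner_neq0.
Qed.

Lemma stanley_space_Phi_join i (v : {mpoly K[n']}) m c :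
  stanley_space (phi (a i)) (Z' i) v -> m \in msupp v -> (phi c <= m)%MM ->
  stanley_space (a i) (Z i) ('X_[mlcm (a i) c] : {mpoly K[n]}).
Proof.
move=> Sv mv le_cm; apply: stanley_space_PhiX.
apply: (stanley_spaceX_between Sv mv); rewrite phi_join ?lem_mlcml //.
by rewrite lem_mlcm le_cm andbT (stanley_space_msupp_le Sv mv).
Qed.

Lemma stanley_Phi_msupp_disjoint i k (v w : {mpoly K[n']}) m :
  i != k -> stanley_space (phi (a i)) (Z' i) v -> stanley_space (phi (a k)) (Z' k) w ->
  m \in msupp v -> m \notin msupp w.
Proof.
move=> neq_ik Sv Sw mv; apply/negP => mw.
have Si := stanley_space_Phi_join Sv mv (stanley_space_msupp_le Sw mw).
have := stanley_space_Phi_join Sw mw (stanley_space_msupp_le Sv mv); rewrite mlcmC => Sk.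
have /eqP := stanley_decomposition_meet_eq0 SD (monomial_ideal0 J_monomial) neq_ik Si Sk.
by rewrite (negbTE (mpolyX_neq0 _ _)).
Qed.

Lemma stanley_Phi_sum_direct (v : Omega -> {mpoly K[n']}) :
  (forall i, stanley_space (phi (a i)) (Z' i) (v i)) -> \sum_i v i = 0 -> forall i, v i = 0.
Proof.
move=> Sv sum_v i; apply/mpolyP => m; rewrite mcoeff0.
case: (boolP (m \in msupp (v i))) => [mv|/memN_msupp_eq0 //].
have : (\sum_k v k)@_m = (v i)@_m.
  rewrite raddf_sum (bigD1 i) //= big1 ?addr0 // => k neq_ki.
  by apply: memN_msupp_eq0; apply: stanley_Phi_msupp_disjoint (Sv i) (Sv k) mv; rewrite eq_sym.
by rewrite sum_v mcoeff0 => /esym.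
Qed.

Lemma stanley_Phi_msupp_in_ideal i (v : {mpoly K[n']}) m :
  stanley_space (phi (a i)) (Z' i) v -> m \in msupp v -> gen_ideal (Phi_image phi I) 'X_[m].
Proof.
case: SD => SD_sub _ _ Sv /Sv [b [_ ->]].
exists [:: ('X_[b], 'X_[phi (a i)])]; split; last by rewrite big_seq1 /= -mpolyXD addmC.
move=> x; rewrite mem_seq1 => /eqP -> /=; exists 'X_[a i].
by split; [apply: (SD_sub i); apply: stanley_spaceX | rewrite Phi_mapX].
Qed.

Lemma stanley_Phi_msupp_notin_ideal i (v : {mpoly K[n']}) m :
  stanley_space (phi (a i)) (Z' i) v -> m \in msupp v -> ~ gen_ideal (Phi_image phi J) 'X_[m].
Proof.
move=> Sv mv /(gen_Phi_image_monomialX J_monomial) [c Jc le_cm].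
have Sic := stanley_space_Phi_join Sv mv le_cm.
have Jic := monomial_idealX_le J_monomial Jc (lem_mlcmr (a i) c).
have /eqP := stanley_decomposition_J_eq0 SD Sic Jic.
by rewrite (negbTE (mpolyX_neq0 _ _)).
Qed.

End StanleyTransfer.

Theorem lemma4p2 (K : fieldType) (n n' : nat)
  (I J : {mpoly K[n]} -> Prop)
  (hI : monomial_ideal I) (hJ : monomial_ideal J)
  (hJI : (forall p, J p -> I p) /\ (exists p, I p /\ ~ J p))
  (phi : 'X_{1..n} -> 'X_{1..n'})
  (Omega : finType) (a : Omega -> 'X_{1..n}) (Z : Omega -> {set 'I_n})
  (hSD : stanley_decomposition I J a Z)
  (Z' : Omega -> {set 'I_n'})
  (hinj : injective phi) (hmono : monotonic_mnm phi) (hjoin : preserves_joins phi)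
  (hcap : forall i (q : {mpoly K[n']}),
      (stanley_space (phi (a i)) (Z' i) q /\ Phi_image phi (fun _ : {mpoly K[n]} => True) q)
      <-> Phi_image phi (stanley_space (a i) (Z i)) q) :
  let I' := gen_ideal (Phi_image phi I) in
  let J' := gen_ideal (Phi_image phi J) in
  (forall v : Omega -> {mpoly K[n']},
      (forall i, stanley_space (phi (a i)) (Z' i) (v i)) ->
      \sum_i v i = 0 -> forall i, v i = 0)
  /\
  (forall i (v : {mpoly K[n']}), stanley_space (phi (a i)) (Z' i) v ->
      forall m, m \in msupp v -> I' 'X_[m] /\ ~ J' 'X_[m]).
Proof.
(* Monotonicity follows from preservation of joins. *)
move=> I' J'; split; first exact: (stanley_Phi_sum_direct hJ hSD hinj hjoin hcap).
move=> i v Sv m mv; split; first exact: (stanley_Phi_msupp_in_ideal hSD Sv mv).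
exact: (stanley_Phi_msupp_notin_ideal hJ hSD hinj hjoin hcap Sv mv).
Qed.
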